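(* Let $A_0\in\mathbb{R}^{n\times n}$, $B\in\mathbb{R}^{n\times1}$, $K\in\mathbb{R}^{1\times n}$, and let $P_0\succeq0$ be symmetric with $A_0^\top P_0+P_0A_0\preceq0$, $\ker P_0\subseteq\ker A_0$, and $P_0$ not of full rank. If $h,\mu\in\mathbb{R}$ satisfy $P_0B-hA_0^\top K^\top=\mu K^\top$ and $P_0+hK^\top K\succ0$, then $\mu=0$. *)

From mathcomp Require Import all_boot all_order all_algebra.
From mathcomp Require Import reals.
Set Implicit Arguments. Unset Strict Implicit. Unset Printing Implicit Defensive.
Import Order.TTheory GRing.Theory Num.Theory.
Local Open Scope ring_scope.

Definition qform (R : realType) (n : nat) (M : 'M[R]_n) (x : 'cV[R]_n) : R :=
  (x^T *m M *m x) ord0 ord0.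

Definition psdmx (R : realType) (n : nat) (M : 'M[R]_n) : Prop :=
  forall x : 'cV[R]_n, 0 <= qform M x.
Definition nsdmx (R : realType) (n : nat) (M : 'M[R]_n) : Prop :=
  forall x : 'cV[R]_n, qform M x <= 0.
Definition pdmx (R : realType) (n : nat) (M : 'M[R]_n) : Prop :=
  forall x : 'cV[R]_n, x != 0 -> 0 < qform M x.

From mathcomp Require Import all_boot all_order all_algebra.
From mathcomp Require Import reals.
Import Order.TTheory GRing.Theory Num.Theory.
Set Implicit Arguments. Unset Strict Implicit. Unset Printing Implicit Defensive.
Local Open Scope ring_scope.

(* Take v != 0 in ker P0 (it exists since P0 is singular); then A0 v = 0 too.
   Multiplying the identity P0 B - h A0^T K^T = mu K^T on the left by v^T kills
   the left-hand side, so mu (K v) = 0.  If mu were nonzero, then K v = 0 and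
   (P0 + h K^T K) v = 0, contradicting positive definiteness. *)

Lemma mxrank_lt_ker_neq0 (F : fieldType) (n : nat) (M : 'M[F]_n) :
  (\rank M < n)%N -> exists2 v : 'cV[F]_n, v != 0 & M *m v = 0.
Proof.
move=> rkM; have kerNZ : kermx M^T != 0.
  apply: contraTneq rkM => ker0.
  by rewrite -mxrank_tr -leqNgt -subn_eq0 -mxrank_ker ker0 mxrank0.
have [i rowNZ] : exists i, row i (kermx M^T) != 0.
  apply/existsP; apply: contraR kerNZ; rewrite negb_exists => /forallP rowsZ.
  by apply/eqP/row_matrixP => i; rewrite row0; exact/eqP/negPn/rowsZ.
exists (row i (kermx M^T))^T; first by rewrite trmx_eq0.
by rewrite -[M in M *m _]trmxK -trmx_mul -row_mul mulmx_ker row0 trmx0.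
Qed.

Lemma pdmx_ker0 (R : realType) (n : nat) (M : 'M[R]_n) (v : 'cV[R]_n) :
  pdmx M -> M *m v = 0 -> v = 0.
Proof.
move=> pdM Mv0; apply/eqP; apply: contraT => vNZ.
by have := pdM v vNZ; rewrite /qform -mulmxA Mv0 mulmx0 mxE ltxx.
Qed.

Lemma trmx_mul_ker (R : comPzRingType) (m n : nat) (M : 'M[R]_(m, n)) (v : 'cV[R]_n) :
  M *m v = 0 -> v^T *m M^T = 0.
Proof. by move=> Mv0; rewrite -trmx_mul Mv0 trmx0. Qed.

Theorem mainTheorem6 (R : realType) (n : nat)
    (A0 : 'M[R]_n) (B : 'cV[R]_n) (K : 'rV[R]_n) (P0 : 'M[R]_n)
    (h mu : R) :
  P0^T = P0 ->
  psdmx P0 ->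
  nsdmx (A0^T *m P0 + P0 *m A0) ->
  (forall x : 'cV[R]_n, P0 *m x = 0 -> A0 *m x = 0) ->
  (\rank P0 < n)%N ->
  P0 *m B - h *: (A0^T *m K^T) = mu *: K^T ->
  pdmx (P0 + h *: (K^T *m K)) ->
  mu = 0.
Proof.
move=> P0sym _ _ kerP0A0 rkP0 eqB pdM.
have [v vNZ P0v] := mxrank_lt_ker_neq0 rkP0.
have vP0 : v^T *m P0 = 0 by rewrite -{1}P0sym trmx_mul_ker.
have vA0 : v^T *m A0^T = 0 by rewrite trmx_mul_ker // kerP0A0.
have muKv : mu *: (v^T *m K^T) = 0.
  rewrite scalemxAr -eqB mulmxBr mulmxA vP0 mul0mx.
  by rewrite -scalemxAr mulmxA vA0 mul0mx scaler0 subrr.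
apply/eqP; apply: contraT => muNZ.
have Kv : K *m v = 0.
  move/eqP: muKv; rewrite scalemx_eq0 (negbTE muNZ) /= => /eqP vK.
  by rewrite -[K *m v]trmxK trmx_mul vK trmx0.
have Mv : (P0 + h *: (K^T *m K)) *m v = 0.
  by rewrite mulmxDl P0v -scalemxAl -mulmxA Kv mulmx0 scaler0 addr0.
by rewrite (pdmx_ker0 pdM Mv) eqxx in vNZ.
Qed.
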